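(* Let $\Omega=x\frac{d}{dx}$. For functions $f,g$ possessing all necessary derivatives and every integer $n\ge 1$, \[ \Omega^n (f\circ g) = \sum_{\pi\in\Pi_n} \left( f^{(|\pi|)}\circ g \right) \prod_{B\in \pi} \Omega^{|B|}g. \]
   Context: $\Pi_n$ is the set of all set partitions of $[n]=\{1,\dots,n\}$; for $\pi\in\Pi_n$, $|\pi|$ is its number of blocks and $|B|$ the size of a block $B$. $f^{(j)}$ is the $j$th derivative of $f$. *)

From HB Require Import structures.
From mathcomp Require Import all_boot all_order all_algebra.
From mathcomp Require Import all_classical all_reals all_analysis.
Set Implicit Arguments. Unset Strict Implicit. Unset Printing Implicit Defensive.
Import Order.TTheory GRing.Theory Num.Theory.
Local Open Scope ring_scope.

Definition Omega (R : realType) (h : R -> R) : R -> R :=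
  fun x => x * derive1 h x.

Definition OmegaN (R : realType) (n : nat) (h : R -> R) : R -> R :=
  iter n (@Omega R) h.

(* Apply Omega to the term of a partition P of a set S and let
   a be a new point.  By the chain rule, Omega (f^(k) o g) = (f^(k+1) o g) * Omega g
   is the term of P extended by the singleton block {a}, and by the product rule
   Omega (Omega^|B| g) = Omega^(|B|+1) g is the term of P with a added to the
   block B.  Every partition of S + {a} arises exactly once in this way. *)

From HB Require Import structures.
From mathcomp Require Import all_boot all_order all_algebra.
Set Implicit Arguments. Unset Strict Implicit. Unset Printing Implicit Defensive.
Import Order.TTheory GRing.Theory Num.Theory.
Local Open Scope ring_scope.

Section PartitionsOfSetU1.
Variables (T : finType) (S : {set T}) (a : T).
Hypothesis aS : a \notin S.
Implicit Types (P Q : {set {set T}}) (B : {set T}).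

Lemma notin_partition_block P B : partition P S -> B \in P -> a \notin B.
Proof. by move=> pP BP; apply: contra aS; apply: (subsetP (partitionS pP BP)). Qed.

Lemma setU1_notin_partition P B : partition P S -> a |: B \notin P.
Proof. by move=> pP; apply/negP => /(notin_partition_block pP); rewrite setU11. Qed.

Lemma setU1_notin_partitionD1 P B : partition P S -> a |: B \notin P :\ B.
Proof. by move=> pP; apply: contra (setU1_notin_partition B pP); case/setD1P. Qed.

Lemma set1_notin_partition P : partition P S -> [set a] \notin P.
Proof. by rewrite -[[set a]]setU0; apply: setU1_notin_partition. Qed.

Lemma partition_set1U P : partition P S -> partition ([set a] |: P) (a |: S).
Proof.
by move=> pP; apply: partitionU1 pP _ _; rewrite ?disjoints1 // -card_gt0 cards1.
Qed.

Definition add_to_block P B := (a |: B) |: (P :\ B).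

Definition remove_point Q := let B := pblock Q a in ((B :\ a) |: (Q :\ B), B :\ a).

Lemma add_to_block_partition P B : partition P S -> B \in P ->
  partition (add_to_block P B) (a |: S) && ([set a] \notin add_to_block P B).
Proof.
move=> pP BP; have aB := notin_partition_block pP BP.
have /set0Pn [b bB] := partition_neq0 pP BP.
apply/andP; split.
  have -> : a |: S = (a |: B) :|: (S :\: B).
    by rewrite -setUA -{1}(setID S B) (setIidPr (partitionS pP BP)).
  apply: partitionU1 (partitionD1 pP BP) _ _.
    by apply/set0Pn; exists a; rewrite setU11.
  rewrite disjoints_subset; apply/subsetP => x; rewrite !inE.
  by case/predU1P => [->|->]; rewrite ?(negbTE aS) ?andbF.
rewrite !inE negb_or (negbTE (set1_notin_partition pP)) andbF andbT.
by apply: contraNneq aB => /setP /(_ b); rewrite !inE bB orbT => /eqP <-.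
Qed.

Lemma add_to_blockK P B :
  partition P S -> B \in P -> remove_point (add_to_block P B) = (P, B).
Proof.
move=> pP BP; have /andP[pQ _] := add_to_block_partition pP BP.
rewrite /remove_point; have -> : pblock (add_to_block P B) a = a |: B.
  by apply: def_pblock (partition_trivIset pQ) _ _; rewrite !setU11.
have aB := notin_partition_block pP BP; have aBP := setU1_notin_partitionD1 B pP.
by rewrite /add_to_block setU1K // setU1K // setD1K.
Qed.

Section RemovePoint.
Variable Q : {set {set T}}.
Hypotheses (pQ : partition Q (a |: S)) (aQ : [set a] \notin Q).
Let C := pblock Q a.

Let aC : a \in C. Proof. by rewrite mem_pblock (cover_partition pQ) setU11. Qed.
Let CQ : C \in Q. Proof. by apply: pblock_mem; rewrite (cover_partition pQ) setU11. Qed.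

Let Ca_neq0 : C :\ a != set0.
Proof. by apply: contraNneq aQ => Ca0; rewrite -[[set a]]setU0 -Ca0 setD1K. Qed.

Let Ca_notin : C :\ a \notin Q.
Proof.
apply/negP => CaQ; have /set0Pn [b bCa] := Ca_neq0.
have tQ := partition_trivIset pQ.
have bC : b \in C by move: bCa; rewrite inE => /andP[].
have CaC : C :\ a = C by rewrite -(def_pblock tQ CaQ bCa) (def_pblock tQ CQ bC).
by move: aC; rewrite -CaC !inE eqxx.
Qed.

Lemma remove_pointK : add_to_block (remove_point Q).1 (remove_point Q).2 = Q.
Proof.
rewrite /add_to_block /remove_point /= -/C setD1K // setU1K ?setD1K //.
by apply: contra Ca_notin; case/setD1P.
Qed.

Lemma remove_point_partition :
  partition (remove_point Q).1 S && ((remove_point Q).2 \in (remove_point Q).1).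
Proof.
rewrite /remove_point /= -/C setU11 andbT.
have -> : S = (C :\ a) :|: ((a |: S) :\: C).
  apply/setP => x; rewrite !inE; have := subsetP (partitionS pQ CQ) x; rewrite !inE.
  case: (eqVneq x a) => [->|xa] /=; first by rewrite aC (negbTE aS).
  by case: (x \in C) => // ->.
apply: partitionU1 (partitionD1 pQ CQ) Ca_neq0 _.
by rewrite disjoints_subset; apply/subsetP => x; rewrite !inE => /andP[_ ->].
Qed.
End RemovePoint.

Variable R : comPzSemiRingType.

Lemma big_partition_set1_block (F : {set {set T}} -> R) :
  \sum_(Q | partition Q (a |: S) && ([set a] \in Q)) F Q =
  \sum_(P | partition P S) F ([set a] |: P).
Proof.
rewrite (reindex_onto (fun P => [set a] |: P) (fun Q => Q :\ [set a])) /=; last first.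
  by move=> Q /andP[_ aQ]; rewrite setD1K.
apply: eq_bigl => P; rewrite setU11 andbT; apply/andP/idP => [[pQ /eqP <-]|pP].
  by have := partitionD1 pQ (setU11 [set a] P); rewrite setU1K.
by rewrite partition_set1U // setU1K ?set1_notin_partition.
Qed.

Lemma big_partition_no_set1_block (F : {set {set T}} -> R) :
  \sum_(Q | partition Q (a |: S) && ([set a] \notin Q)) F Q =
  \sum_(P | partition P S) \sum_(B in P) F (add_to_block P B).
Proof.
rewrite pair_big_dep.
rewrite (reindex_onto (fun PB => add_to_block PB.1 PB.2) remove_point) /=; last first.
  by move=> Q /andP[pQ aQ]; apply: remove_pointK.
apply: eq_bigl => -[P B] /=; apply/andP/idP => [[/andP[pQ aQ] /eqP PB]|/andP[pP BP]].
  by move: (remove_point_partition pQ aQ); rewrite PB.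
by rewrite add_to_block_partition ?add_to_blockK.
Qed.

Lemma big_partition_setU1 (c : nat -> R) (w : {set T} -> R) :
  \sum_(Q | partition Q (a |: S)) c #|Q| * \prod_(C in Q) w C =
  \sum_(P | partition P S) (c #|P|.+1 * (w [set a] * \prod_(B in P) w B) +
      c #|P| * \sum_(B in P) w (a |: B) * \prod_(B' in P :\ B) w B').
Proof.
rewrite (bigID (fun Q => [set a] \in Q)) /= big_partition_set1_block.
rewrite big_partition_no_set1_block -big_split; apply: eq_bigr => P pP /=.
have aP := set1_notin_partition pP.
rewrite big_setU1 //= cardsU1 aP mulr_sumr; congr (_ + _); apply: eq_bigr => B BP.
have aBP := setU1_notin_partitionD1 B pP.
by rewrite /add_to_block big_setU1 //= cardsU1 aBP [#|P|](cardsD1 B) BP.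
Qed.

End PartitionsOfSetU1.

Lemma card_partition_le (T : finType) (P : {set {set T}}) (S : {set T}) :
  partition P S -> (#|P| <= #|S|)%N.
Proof.
move=> pP; rewrite (card_partition pP) -sum1_card; apply: leq_sum => B BP.
by rewrite card_gt0 (partition_neq0 pP BP).
Qed.

From mathcomp Require Import all_classical all_reals all_analysis ring.
Import numFieldNormedType.Exports.

Lemma derivable_is_derive1 (R : numFieldType) (V : normedModType R) (h : R -> V) x :
  derivable h x 1 -> is_derive x 1 h (derive1 h x).
Proof. by move=> dh; rewrite derive1E; apply: derivableP. Qed.

Section BigDerive.
Variables (R : numFieldType) (V : normedModType R).

Lemma is_derive_big_sum (W : normedModType R) (I : finType) (p : pred I)
    (h : I -> V -> W) (d : I -> W) (x v : V) :
  (forall i, p i -> is_derive x v (h i) (d i)) ->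
  is_derive x v (fun y => \sum_(i | p i) h i y) (\sum_(i | p i) d i).
Proof.
move=> dh; rewrite -[fun y => _](fct_sumE _ _ h).
by elim/big_ind2: _ => //; [exact: is_derive_cst | move=> *; exact: is_deriveD].
Qed.

Lemma is_derive_big_prod (I : finType) (A : {set I}) (h : I -> V -> R) (d : I -> R)
    (x v : V) :
  (forall i, i \in A -> is_derive x v (h i) (d i)) ->
  is_derive x v (fun y => \prod_(i in A) h i y)
    (\sum_(i in A) d i * \prod_(j in A :\ i) h j x).
Proof.
elim: {A}_.+1 {-2}A (ltnSn #|A|) => // m IH A.
case: (set_0Vmem A) => [-> _ _|[i0 i0A] Am dh].
  rewrite big_set0; under eq_fun do rewrite big_set0.
  exact: is_derive_cst.
have -> : (fun y => \prod_(i in A) h i y) = h i0 * (fun y => \prod_(i in A :\ i0) h i y).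
  by apply/funext => y; rewrite (big_setD1 i0).
apply: is_derive_eq.
  apply: is_deriveM; first exact: dh.
  apply: IH => [|i /setD1P[_]]; last exact: dh.
  by rewrite -ltnS (leq_trans _ Am) // (cardsD1 i0 A) i0A.
rewrite [RHS](big_setD1 i0) //= addrC mulrC; congr (_ + _).
rewrite scaler_sumr; apply: eq_bigr => i /setD1P[ii0 iA].
rewrite [in RHS](big_setD1 i0) /=; last by rewrite in_setD1 i0A eq_sym ii0.
by rewrite !finset.setDDl finset.setUC mulrCA.
Qed.
End BigDerive.

Section DerivableUpto.
Variable R : realType.
Implicit Types h k : R -> R.

Fixpoint derivable_upto (m : nat) h : Prop :=
  if m is m'.+1 then (forall x, derivable h x 1) /\ derivable_upto m' (derive1 h)
  else True.

Lemma derivable_uptoP m h :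
  derivable_upto m h <-> forall j x, (j < m)%N -> derivable (derive1n j h) x 1.
Proof.
elim: m h => [|m IH] h /=; first by split.
have derive1nSr j : derive1n j.+1 h = derive1n j (derive1 h) by rewrite /derive1n iterSr.
rewrite IH; split=> [[dh dh'] [|j] x jm|dh]; first exact: dh.
  by rewrite derive1nSr; apply: dh'.
by split=> [x|j x jm]; [apply: (dh 0%N) | rewrite -derive1nSr; apply: dh].
Qed.

Lemma derivable_uptoW m h : derivable_upto m.+1 h -> derivable_upto m h.
Proof. by elim: m h => // m IH h [dh /IH]. Qed.

Lemma derivable_upto_cst m (c : R) : derivable_upto m (cst c).
Proof.
elim: m c => //= m IH c; split=> [x|]; first exact: derivable_cst.
have -> : derive1 (cst c) = cst 0 by apply/funext => x; rewrite derive1_cst.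
exact: IH.
Qed.

Lemma derivable_upto_id m : derivable_upto m id.
Proof.
case: m => //= m; split=> [x|]; first exact: derivable_id.
have -> : derive1 (@id R) = cst 1 by apply/funext => x; rewrite derive1_id.
exact: derivable_upto_cst.
Qed.

Lemma derivable_uptoD m h k :
  derivable_upto m h -> derivable_upto m k -> derivable_upto m (h + k).
Proof.
elim: m h k => //= m IH h k [dh dh'] [dk dk']; split=> [x|]; first exact: derivableD.
have -> : derive1 (h + k) = derive1 h + derive1 k.
  by apply/funext => x; rewrite derive1E deriveD // -!derive1E.
exact: IH.
Qed.

Lemma derivable_uptoM m h k :
  derivable_upto m h -> derivable_upto m k -> derivable_upto m (h * k).
Proof.
elim: m h k => //= m IH h k [dh dh'] [dk dk']; split=> [x|]; first exact: derivableM.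
have -> : derive1 (h * k) = h * derive1 k + k * derive1 h.
  by apply/funext => x; rewrite derive1E deriveM // -!derive1E.
by apply: derivable_uptoD; apply: IH => //; apply: derivable_uptoW; split.
Qed.

Lemma derivable_upto_Omega m h : derivable_upto m.+1 h -> derivable_upto m (Omega h).
Proof.
case=> _ dh'; have -> : Omega h = id * derive1 h by [].
exact: derivable_uptoM (derivable_upto_id m) dh'.
Qed.

Lemma derivable_upto_OmegaN j m h :
  derivable_upto (j + m) h -> derivable_upto m (OmegaN j h).
Proof.
elim: j m => // j IH m dh; apply: derivable_upto_Omega; apply: IH.
by rewrite -addSnnS.
Qed.

Lemma derivable_OmegaN m h j x :
  derivable_upto m h -> (j < m)%N -> derivable (OmegaN j h) x 1.
Proof.
move=> dh jm; have [i mE] : exists i, m = (j + i.+1)%N.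
  by exists (m - j.+1)%N; rewrite addnS -addSn subnKC.
by move: dh; rewrite mE => /derivable_upto_OmegaN [].
Qed.
End DerivableUpto.

Section OmegaComp.
Variables (R : realType) (T : finType) (f g : R -> R).
Hypothesis hf : forall k x, (k < #|T|)%N -> derivable (derive1n k f) x 1.
Hypothesis hg : derivable_upto #|T| g.

Definition partition_expansion (S : {set T}) (x : R) : R :=
  \sum_(P : {set {set T}} | finset.partition P S)
    derive1n #|P| f (g x) * \prod_(B in P) OmegaN #|B| g x.

Lemma is_derive_partition_term (S : {set T}) (P : {set {set T}}) (x : R) :
  finset.partition P S -> (#|S| < #|T|)%N ->
  is_derive x 1 (fun y => derive1n #|P| f (g y) * \prod_(B in P) OmegaN #|B| g y)
    (derive1n #|P|.+1 f (g x) * derive1 g x * \prod_(B in P) OmegaN #|B| g x +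
     derive1n #|P| f (g x) *
       \sum_(B in P) derive1 (OmegaN #|B| g) x * \prod_(B' in P :\ B) OmegaN #|B'| g x).
Proof.
move=> pP ST; have PT := leq_ltn_trans (card_partition_le pP) ST.
have -> : (fun y => derive1n #|P| f (g y) * \prod_(B in P) OmegaN #|B| g y) =
    (derive1n #|P| f \o g) * (fun y => \prod_(B in P) OmegaN #|B| g y) by [].
apply: is_derive_eq.
  apply: is_deriveM.
    apply: is_derive1_comp; apply: derivable_is_derive1; first exact: hf.
    by apply: (@derivable_OmegaN R #|T| g 0 x hg); apply: leq_ltn_trans ST.
  apply: is_derive_big_prod => B BP; apply/derivable_is_derive1/(derivable_OmegaN hg).
  exact: leq_ltn_trans (subset_leq_card (partitionS pP BP)) ST.
by rewrite addrC derive1nS; congr (_ + _); apply: mulrC.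
Qed.

Lemma Omega_partition_expansionU1 (S : {set T}) (a : T) :
  a \notin S -> Omega (partition_expansion S) =1 partition_expansion (a |: S).
Proof.
move=> aS x; have ST : (#|S| < #|T|)%N.
  by apply: leq_trans (max_card (a |: S)); rewrite cardsU1 aS add1n.
rewrite /Omega /partition_expansion derive1E.
have [_ ->] := is_derive_big_sum
  (fun P (pP : finset.partition P S) => is_derive_partition_term x pP ST).
rewrite [RHS](big_partition_setU1 aS (fun k => derive1n k f (g x))
  (fun B => OmegaN #|B| g x)) mulr_sumr; apply: eq_bigr => P pP.
rewrite mulrDr; congr (_ + _).
  by rewrite cards1; change (OmegaN 1 g x) with (x * derive1 g x); ring.
rewrite mulrCA; congr (_ * _); rewrite mulr_sumr; apply: eq_bigr => B BP.
by rewrite cardsU1 (notin_partition_block aS pP BP) add1n mulrA.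
Qed.

Lemma OmegaN_comp_partition_expansion (S : {set T}) :
  OmegaN #|S| (f \o g) =1 partition_expansion S.
Proof.
move: {2}#|S| (erefl #|S|) => k; elim: k S => [|k IH] S cS x.
  rewrite /partition_expansion (cards0_eq cS).
  rewrite (eq_bigl (pred1 finset.set0)) => [|P]; last by rewrite partition_set0.
  by rewrite big_pred1_eq big_set0 mulr1 !cards0.
have [a aS] : exists a, a \in S by apply/set0Pn; rewrite -card_gt0 cS.
have cSa : #|S :\ a| = k by move: cS; rewrite (cardsD1 a) aS => -[].
rewrite cS; change (Omega (OmegaN k (f \o g)) x = partition_expansion S x).
rewrite -cSa (funext (IH _ cSa)) (@Omega_partition_expansionU1 (S :\ a) a).
  by rewrite finset.setD1K.
by rewrite setD11.
Qed.
End OmegaComp.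

Theorem lemma4p7 (R : realType) (f g : R -> R) (n : nat) (hn : (1 <= n)%N)
  (hf : forall (k : nat) (x : R), (k < n)%N -> derivable (derive1n k f) x 1)
  (hg : forall (k : nat) (x : R), (k < n)%N -> derivable (derive1n k g) x 1) :
  forall x : R,
    OmegaN n (f \o g) x =
    \sum_(P : {set {set 'I_n}} | finset.partition P [set: 'I_n])
      derive1n #|P| f (g x) * \prod_(B : {set 'I_n} | B \in P) OmegaN #|B| g x.
Proof.
have cardT : #|[set: 'I_n]| = n by rewrite cardsT card_ord.
have hfT : forall k x, (k < #|'I_n|)%N -> derivable (derive1n k f) x 1.
  by rewrite card_ord.
have hgT : derivable_upto #|'I_n| g by rewrite card_ord; apply/derivable_uptoP.
by move=> x; rewrite -{1}cardT (OmegaN_comp_partition_expansion hfT hgT).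
Qed.
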